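(* Let $\kappa$ be a gravitational lens satisfying the conditions in the context, and let $\alpha(x)=\frac{2}{x}\int_0^x\kappa(t)\,t\,dt$ for $x>0$ be its normalized deflection angle. An Einstein ring is a radius $x_E>0$ with $\alpha(x_E)=x_E$. Then at least one Einstein ring exists if and only if $\kappa(0)>1$ (where $\kappa(0)=+\infty$ for singular lenses).
   Context: A gravitational lens (in a single lens plane) is given by a normalized surface density $\kappa$ on the plane $\mathbb{R}^2$ satisfying: (i) Continuity: $\kappa:\mathbb{R}^2\to[0,\infty)$ is continuous, except possibly at the origin for singular lenses. (ii) Circular symmetry: $\kappa$ depends only on the radius $x=\|\mathbf{x}\|$; write $\kappa=\kappa(x)$. (iii) Finiteness: $\kappa(x)<\infty$ for $x>0$; $\kappa(0)=1/C_1$ for a constant $C_1\ge 0$ (so $\kappa(0)=+\infty$ when $C_1=0$); and $\lim_{x\to\infty}\kappa(x)\,x=C_2$ for a constant $0\le C_2<\infty$. (iv) Self-gravitation: $\kappa(x)<\bar\kappa(x)$ for $x>0$, where $\bar\kappa(x)=\frac{2}{x^2}\int_0^x\kappa(t)\,t\,dt$. The lens is called singular if and only if $C_1=0$, and non-singular otherwise. The deflection angle $\alpha$ is the radial derivative of the lensing potential $f$ solving $\Delta f=2\kappa$ (with deflection vanishing as small as possible at infinity), which for a circularly symmetric lens is $\alpha(x)=\frac{2}{x}\int_0^x\kappa(t)\,t\,dt$. *)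

From Stdlib Require Import Reals.
From Coquelicot Require Import Coquelicot.
Open Scope R_scope.

(* A circularly symmetric lens is described by its radial profile
   kappa : R -> R (only its values on [0, +oo) matter) and the constant C1. *)

Definition mass (kappa : R -> R) (x : R) : R :=
  RInt_gen (fun t => kappa t * t) (at_right 0) (at_point x).

Definition kbar (kappa : R -> R) (x : R) : R := 2 / (x ^ 2) * mass kappa x.

Definition alpha (kappa : R -> R) (x : R) : R := 2 / x * mass kappa x.

Definition kappa0 (C1 : R) : Rbar :=
  match Req_EM_T C1 0 with
  | left _ => p_infty
  | right _ => Finite (/ C1)
  end.

Definition is_lens (kappa : R -> R) (C1 : R) : Prop :=
  (forall x, 0 < x -> 0 <= kappa x) /\
  (forall x, 0 < x -> continuous kappa x) /\
  0 <= C1 /\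
  (0 < C1 -> kappa 0 = / C1 /\ filterlim kappa (at_right 0) (locally (/ C1))) /\
  (C1 = 0 -> filterlim kappa (at_right 0) (Rbar_locally p_infty)) /\
  (exists C2, 0 <= C2 /\
     filterlim (fun x => kappa x * x) (Rbar_locally p_infty) (locally C2)) /\
  (* the mass integral is finite (needed for kbar and alpha to make sense) *)
  (forall x, 0 < x -> ex_RInt_gen (fun t => kappa t * t) (at_right 0) (at_point x)) /\
  (forall x, 0 < x -> kappa x < kbar kappa x).

Definition einstein_ring (kappa : R -> R) (xE : R) : Prop :=
  0 < xE /\ alpha kappa xE = xE.

From Stdlib Require Import Reals Lra.
From Coquelicot Require Import Coquelicot.
Open Scope R_scope.

(* The mean density kbar x = 2/x^2 int_0^x kappa(t) t dt satisfies
   kbar' = (2/x)(kappa - kbar), which self-gravitation makes negative, so kbar is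
   strictly decreasing; and since alpha x = x kbar x, x is an Einstein ring iff
   kbar x = 1.  Near the origin kbar is squeezed between the bounds of kappa, hence
   tends to kappa(0); at infinity kappa(t) t stays bounded, so the mass grows at most
   linearly and kbar tends to 0.  A continuous strictly decreasing function with these
   limits takes the value 1 iff kappa(0) > 1. *)

Lemma at_right_ex (a : R) (P : R -> Prop) :
  at_right a P -> exists d, 0 < d /\ forall t, a < t < a + d -> P t.
Proof.
  intros [d Hd]; exists d; split; [apply cond_pos|].
  intros t Ht; apply Hd; [|lra].
  change (Rabs (t - a) < d); rewrite Rabs_pos_eq; lra.
Qed.

Lemma at_right_intro (a d : R) (P : R -> Prop) :
  0 < d -> (forall t, a < t < a + d -> P t) -> at_right a P.
Proof.
  intros Hd HP; exists (mkposreal d Hd); intros t Hb Ht; apply HP.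
  change (Rabs (t - a) < d) in Hb; rewrite Rabs_pos_eq in Hb; simpl in Hb; lra.
Qed.

Lemma RInt_gen_at_right_le (f g : R -> R) (a x lf lg : R) : a < x ->
  (forall t, a < t <= x -> 0 <= f t <= g t) ->
  is_RInt_gen f (at_right a) (at_point x) lf ->
  is_RInt_gen g (at_right a) (at_point x) lg -> lf <= lg.
Proof.
  intros Hax Hfg Hf Hg.
  assert (Hbox : filter_prod (at_right a) (at_point x)
    (fun ab : R * R => a < fst ab < x /\ snd ab = x)).
  { apply (Filter_prod _ _ _ (fun s => a < s < x) (fun b => b = x)); try easy.
    apply (at_right_intro a (x - a)); [lra | intros; lra]. }
  apply Rle_trans with (Rabs lf); [apply Rle_abs|].
  apply (@RInt_gen_norm R_CompleteNormedModule (at_right a) (at_point x) _ _ f g); try easy.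
  - eapply filter_imp; [|exact Hbox]; intros [s b] [? ?]; simpl in *; lra.
  - eapply filter_imp; [|exact Hbox]; intros [s b] [? ?] t Ht; simpl in *.
    change (Rabs (f t) <= g t); rewrite Rabs_pos_eq; apply Hfg; lra.
Qed.

Lemma is_RInt_gen_at_right_linear (c a x : R) :
  is_RInt_gen (fun t => c * t) (at_right a) (at_point x) (c * x ^ 2 / 2 - c * a ^ 2 / 2).
Proof.
  set (F := fun t => c * t ^ 2 / 2).
  assert (HF : forall t : R, is_derive F t (c * t)).
  { intros t; unfold F; auto_derive; [easy | field]. }
  assert (Hprod : forall P : R -> Prop, (forall t, P t) ->
    filter_prod (at_right a) (at_point x)
      (fun ab => forall t, Rmin (fst ab) (snd ab) <= t <= Rmax (fst ab) (snd ab) -> P t)).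
  { intros P HP; apply (Filter_prod _ _ _ (fun _ => True) (fun _ => True));
      try apply filter_true; auto. }
  apply (is_RInt_gen_ext (Derive F)).
  { eapply filter_imp; [|apply (Hprod _ (fun t => is_derive_unique _ _ _ (HF t)))].
    intros ab H t [Hlo Hhi]; apply H; split; apply Rlt_le; assumption. }
  apply (is_RInt_gen_Derive (Fa := at_right a) (Fb := at_point x)).
  - apply Hprod; intros t; eexists; apply HF.
  - apply Hprod; intros t.
    apply (continuous_ext (fun t => c * t)); [intros; symmetry; apply is_derive_unique, HF|].
    apply (continuous_mult (fun _ => c) (fun t => t));
      [apply continuous_const | apply continuous_id].
  - apply (filterlim_filter_le_1 (F := locally a)); [apply filter_le_within|].
    apply (ex_derive_continuous F); eexists; apply HF.
  - intros P HP; apply locally_singleton in HP; exact HP.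
Qed.

Lemma alpha_eq_mul_kbar kappa x : x <> 0 -> alpha kappa x = x * kbar kappa x.
Proof. intros Hx; unfold alpha, kbar; field; exact Hx. Qed.

Lemma einstein_ring_iff_kbar kappa x :
  einstein_ring kappa x <-> 0 < x /\ kbar kappa x = 1.
Proof.
  unfold einstein_ring; split; intros [Hx Heq]; split; auto;
    rewrite alpha_eq_mul_kbar in * by lra.
  - apply (Rmult_eq_reg_l x); lra.
  - rewrite Heq; ring.
Qed.

Lemma filterlim_at_right_gt (f : R -> R) (a : R) (L : Rbar) (c : R) :
  filterlim f (at_right a) (Rbar_locally L) -> Rbar_lt c L ->
  exists d, 0 < d /\ forall t, a < t < a + d -> c < f t.
Proof.
  intros Hf HcL; apply at_right_ex, (Hf (fun y => Rbar_lt c y)), open_Rbar_gt', HcL.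
Qed.

Lemma filterlim_at_right_lt (f : R -> R) (a : R) (L : Rbar) (c : R) :
  filterlim f (at_right a) (Rbar_locally L) -> Rbar_lt L c ->
  exists d, 0 < d /\ forall t, a < t < a + d -> f t < c.
Proof.
  intros Hf HLc; apply at_right_ex, (Hf (fun y => Rbar_lt y c)), open_Rbar_lt', HLc.
Qed.

Section Lens.

Variable kappa : R -> R.
Hypothesis kappa_ge0 : forall x, 0 < x -> 0 <= kappa x.
Hypothesis kappa_continuous : forall x, 0 < x -> continuous kappa x.
Hypothesis mass_ex : forall x, 0 < x ->
  ex_RInt_gen (fun t => kappa t * t) (at_right 0) (at_point x).
Hypothesis self_gravitating : forall x, 0 < x -> kappa x < kbar kappa x.
Hypothesis density_bounded_at_infinity :
  exists C2, filterlim (fun x => kappa x * x) (Rbar_locally p_infty) (locally C2).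

Lemma continuous_mass_density x : 0 < x -> continuous (fun t => kappa t * t) x.
Proof.
  intros Hx; apply (continuous_mult kappa (fun t => t)); [auto | apply continuous_id].
Qed.

Lemma ex_RInt_mass_density a b : 0 < a -> 0 < b -> ex_RInt (fun t => kappa t * t) a b.
Proof.
  intros Ha Hb; apply (ex_RInt_continuous (V := R_CompleteNormedModule)).
  intros t Ht; apply continuous_mass_density.
  pose proof (Rmin_glb_lt a b 0 Ha Hb); lra.
Qed.

Lemma mass_Chasles a b : 0 < a -> 0 < b ->
  mass kappa b = mass kappa a + RInt (fun t => kappa t * t) a b.
Proof.
  intros Ha Hb; unfold mass.
  rewrite <- (RInt_gen_at_point _ a b) by (apply ex_RInt_mass_density; auto).
  symmetry; apply (RInt_gen_Chasles (Fa := at_right 0) (Fc := at_point b)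
                     (fun t => kappa t * t) a); auto.
  apply ex_RInt_gen_at_point, ex_RInt_mass_density; auto.
Qed.

Lemma is_derive_mass x : 0 < x -> is_derive (mass kappa) x (kappa x * x).
Proof.
  intros Hx.
  assert (Hnear : locally x (fun t => 0 < t)).
  { exists (mkposreal (x / 2) ltac:(lra)); intros t Ht.
    change (Rabs (t - x) < x / 2) in Ht; apply Rabs_def2 in Ht; lra. }
  apply (is_derive_ext_loc
           (fun y => mass kappa (x / 2) + RInt (fun t => kappa t * t) (x / 2) y)).
  { eapply filter_imp; [|exact Hnear]; intros t Ht; symmetry; apply mass_Chasles; lra. }
  rewrite <- (plus_zero_l (kappa x * x)).
  apply (is_derive_plus (fun _ => mass kappa (x / 2)));
    [exact (@is_derive_const R_AbsRing R_NormedModule _ x)|].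
  apply (is_derive_RInt (fun t => kappa t * t) _ (x / 2));
    [|apply continuous_mass_density; auto].
  eapply filter_imp; [|exact Hnear]; intros t Ht.
  apply (RInt_correct (V := R_CompleteNormedModule)), ex_RInt_mass_density; lra.
Qed.

Lemma is_derive_kbar x : 0 < x ->
  is_derive (kbar kappa) x (2 / x * (kappa x - kbar kappa x)).
Proof.
  intros Hx.
  assert (Hscale : is_derive (fun y => 2 / y ^ 2) x (- 4 / x ^ 3)).
  { auto_derive; [nra | field; lra]. }
  pose proof (is_derive_mult _ _ x _ _ Hscale (is_derive_mass x Hx) Rmult_comm) as H.
  unfold kbar; replace (2 / x * _) with (plus (mult (-4 / x ^ 3) (mass kappa x))
                                         (mult (2 / x ^ 2) (kappa x * x))); [exact H|].
  unfold plus, mult; simpl; field; lra.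
Qed.

Lemma continuous_kbar x : 0 < x -> continuity_pt (kbar kappa) x.
Proof.
  intros Hx; apply continuity_pt_filterlim, (ex_derive_continuous (kbar kappa)).
  eexists; apply is_derive_kbar; exact Hx.
Qed.

Lemma kbar_decreasing x y : 0 < x -> x < y -> kbar kappa y < kbar kappa x.
Proof.
  intros Hx Hxy; apply Ropp_lt_cancel.
  apply (incr_function (fun t => - kbar kappa t) 0 p_infty
           (fun t => - (2 / t * (kappa t - kbar kappa t)))); simpl; try easy.
  - intros t Ht _; apply (is_derive_opp (kbar kappa)), is_derive_kbar; exact Ht.
  - intros t Ht _; pose proof (self_gravitating t Ht).
    assert (0 < 2 / t) by (apply Rdiv_lt_0_compat; lra); nra.
Qed.

Lemma kbar_le c x : 0 < x -> (forall t, 0 < t <= x -> kappa t <= c) -> kbar kappa x <= c.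
Proof.
  intros Hx Hc.
  assert (Hm : mass kappa x <= c * x ^ 2 / 2 - c * 0 ^ 2 / 2).
  { apply (RInt_gen_at_right_le (fun t => kappa t * t) (fun t => c * t) 0 x); auto.
    - intros t Ht; pose proof (kappa_ge0 t (proj1 Ht)); split; [nra|].
      apply Rmult_le_compat_r; [lra | apply Hc; exact Ht].
    - apply (RInt_gen_correct (V := R_CompleteNormedModule)), mass_ex; exact Hx.
    - apply is_RInt_gen_at_right_linear. }
  unfold kbar; apply (Rmult_le_reg_r (x ^ 2 / 2)); [nra|].
  replace (2 / x ^ 2 * mass kappa x * (x ^ 2 / 2)) with (mass kappa x) by (field; lra).
  simpl in Hm; nra.
Qed.

Lemma kbar_ge c x : 0 < x -> 0 <= c -> (forall t, 0 < t <= x -> c <= kappa t) ->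
  c <= kbar kappa x.
Proof.
  intros Hx Hc0 Hc.
  assert (Hm : c * x ^ 2 / 2 - c * 0 ^ 2 / 2 <= mass kappa x).
  { apply (RInt_gen_at_right_le (fun t => c * t) (fun t => kappa t * t) 0 x); auto.
    - intros t Ht; split; [nra|].
      apply Rmult_le_compat_r; [lra | apply Hc; exact Ht].
    - apply is_RInt_gen_at_right_linear.
    - apply (RInt_gen_correct (V := R_CompleteNormedModule)), mass_ex; exact Hx. }
  unfold kbar; apply (Rmult_le_reg_r (x ^ 2 / 2)); [nra|].
  replace (2 / x ^ 2 * mass kappa x * (x ^ 2 / 2)) with (mass kappa x) by (field; lra).
  simpl in Hm; nra.
Qed.

Lemma mass_le_affine A x K : 0 < A -> A <= x ->
  (forall t, A < t < x -> kappa t * t <= K) -> mass kappa x <= mass kappa A + K * (x - A).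
Proof.
  intros HA HAx HK; rewrite (mass_Chasles A x) by lra.
  apply Rplus_le_compat_l.
  replace (K * (x - A)) with (RInt (fun _ => K) A x)
    by (rewrite RInt_const; unfold scal; simpl; unfold mult; simpl; ring).
  apply RInt_le; auto; [apply ex_RInt_mass_density; lra | apply ex_RInt_const].
Qed.

Lemma kbar_small_at_infinity e : 0 < e -> exists X, 0 < X /\ kbar kappa X < e.
Proof.
  intros He; destruct density_bounded_at_infinity as [C2 Hlim].
  destruct (Hlim (ball C2 (mkposreal 1 Rlt_0_1)) (locally_ball _ _)) as [M HM].
  set (A := Rmax M 1); set (K := Rabs C2 + 1); set (m := Rabs (mass kappa A)).
  assert (HA : 1 <= A /\ M <= A) by (split; [apply Rmax_r | apply Rmax_l]).
  set (X := Rmax (A + 1) (2 * (m + K) / e + 1)).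
  assert (HX : A + 1 <= X /\ 2 * (m + K) / e + 1 <= X)
    by (split; [apply Rmax_l | apply Rmax_r]).
  assert (HmX : mass kappa X <= m + K * X).
  { assert (mass kappa X <= mass kappa A + K * (X - A)).
    { apply mass_le_affine; try lra; intros t Ht.
      assert (Hb : Rabs (kappa t * t - C2) < 1) by (apply (HM t); lra).
      apply Rabs_def2 in Hb; pose proof (Rle_abs C2); unfold K; lra. }
    pose proof (Rle_abs (mass kappa A)).
    assert (0 < K) by (pose proof (Rabs_pos C2); unfold K; lra).
    unfold m; nra. }
  exists X; split; [lra|].
  assert (Hbig : 2 * (m + K) < e * X).
  { apply (Rmult_lt_reg_r (/ e)); [apply Rinv_0_lt_compat; exact He|].
    replace (e * X * / e) with X by (field; lra); unfold Rdiv in HX; lra. }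
  assert (0 <= m) by apply Rabs_pos.
  unfold kbar; apply (Rmult_lt_reg_r (X ^ 2)); [nra|].
  replace (2 / X ^ 2 * mass kappa X * X ^ 2) with (2 * mass kappa X) by (field; lra).
  simpl; nra.
Qed.

Variable L : Rbar.
Hypothesis kappa_lim0 : filterlim kappa (at_right 0) (Rbar_locally L).

Lemma kappa_lim0_gt1_of_einstein_ring xE : einstein_ring kappa xE -> Rbar_lt 1 L.
Proof.
  intros HxE; apply einstein_ring_iff_kbar in HxE as [HxE HkE].
  destruct (Rbar_lt_dec 1 L) as [Hgt | Hle]; [exact Hgt | exfalso].
  set (y := xE / 2); set (c := (1 + kbar kappa y) / 2).
  assert (Hy : kbar kappa xE < kbar kappa y) by (apply kbar_decreasing; unfold y; lra).
  assert (Hc : Rbar_lt L c).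
  { apply (Rbar_le_lt_trans _ 1); [apply Rbar_not_lt_le, Hle | simpl; unfold c; lra]. }
  destruct (filterlim_at_right_lt _ _ _ _ kappa_lim0 Hc) as [d [Hd Hkd]].
  set (x := Rmin d y / 2).
  assert (Hx : 0 < x /\ x < d /\ x < y).
  { pose proof (Rmin_l d y); pose proof (Rmin_r d y).
    pose proof (Rmin_glb_lt d y 0 Hd ltac:(unfold y; lra)); unfold x; lra. }
  assert (kbar kappa x <= c).
  { apply kbar_le; [lra|]; intros t Ht; left; apply Hkd; lra. }
  assert (kbar kappa y < kbar kappa x) by (apply kbar_decreasing; lra).
  unfold c in *; lra.
Qed.

Lemma einstein_ring_exists : Rbar_lt 1 L -> exists xE, einstein_ring kappa xE.
Proof.
  intros HL.
  destruct (filterlim_at_right_gt _ _ _ _ kappa_lim0 HL) as [d [Hd Hkd]].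
  assert (Hhalf : 1 <= kbar kappa (d / 2)).
  { apply kbar_ge; [lra | lra |]; intros t Ht; left; apply Hkd; lra. }
  assert (Hquarter : 1 < kbar kappa (d / 4)).
  { assert (kbar kappa (d / 2) < kbar kappa (d / 4)) by (apply kbar_decreasing; lra); lra. }
  destruct (kbar_small_at_infinity 1 Rlt_0_1) as [X [HX HXlt]].
  assert (HX4 : d / 4 < X).
  { destruct (Rlt_le_dec (d / 4) X) as [Hlt | [Hlt | Heq]]; [exact Hlt | | subst X; lra].
    assert (kbar kappa (d / 4) < kbar kappa X) by (apply kbar_decreasing; lra); lra. }
  destruct (Ranalysis5.IVT_interv (fun x => 1 - kbar kappa x) (d / 4) X) as [z [Hz Hkz]];
    [| exact HX4 | lra | lra |].
  - intros z Hz; apply continuity_pt_minus.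
    + apply continuity_pt_const; intros ? ?; reflexivity.
    + apply continuous_kbar; lra.
  - exists z; apply einstein_ring_iff_kbar; split; lra.
Qed.

End Lens.

Lemma lens_kappa_lim0 kappa C1 :
  is_lens kappa C1 -> filterlim kappa (at_right 0) (Rbar_locally (kappa0 C1)).
Proof.
  intros (_ & _ & HC1 & Hregular & Hsingular & _).
  unfold kappa0; destruct (Req_EM_T C1 0) as [H0 | H0].
  - apply Hsingular, H0.
  - apply Hregular; lra.
Qed.

Theorem theorem1 (kappa : R -> R) (C1 : R) :
  is_lens kappa C1 ->
  ((exists xE, einstein_ring kappa xE) <-> Rbar_lt (Finite 1) (kappa0 C1)).
Proof.
  intros Hlens.
  pose proof (lens_kappa_lim0 _ _ Hlens) as Hlim0.
  destruct Hlens as (kappa_ge0 & kappa_cont & _ & _ & _ & (C2 & _ & Hinf) & mass_ex & self_grav).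
  split.
  - intros [xE HxE]; eapply kappa_lim0_gt1_of_einstein_ring; eassumption.
  - apply einstein_ring_exists; try assumption.
    exists C2; exact Hinf.
Qed.
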